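(* Let $\mathcal{X}\subseteq\mathbb{R}^d$ be closed and convex, $\mu,\sigma,\delta>0$. Let $h:\mathcal{X}\to\mathbb{R}$ be continuously differentiable with $D_h(x,y)\ge\frac\sigma2\|x-y\|^2$ for all $x,y$, and let $f:\mathcal{X}\to\mathbb{R}$ be differentiable and $\mu$-uniformly convex with respect to $h$ (i.e. $D_f(x,y)\ge\mu D_h(x,y)$ for all $x,y$), with minimizer $x^\ast$. Let $(A_k)_{k\ge0}$ be a nondecreasing sequence of positive numbers, $\alpha_k=A_{k+1}-A_k$, $\tau_k=\alpha_k/A_k$, and $E_k=A_k\big(\mu D_h(x^\ast,z_k)+f(x_k)-f(x^\ast)\big)$. Suppose sequences $(x_k),(z_k)$ in $\mathcal{X}$ satisfy, for all $k$, $$x_{k+1}=\frac{\tau_k}{1+\tau_k}z_k+\frac1{1+\tau_k}x_k,\qquad \nabla h(z_{k+1})=\nabla h(z_k)+\tau_k\Big(\nabla h(x_{k+1})-\nabla h(z_{k+1})-\frac1\mu\nabla f(x_{k+1})\Big).$$ Then $$\frac{E_{k+1}-E_k}{\delta}\le\frac{A_k\tau_k^2}{2\mu\sigma\delta}\|\nabla f(x_{k+1})\|^2.$$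
   Context: $\|\cdot\|$ is the Euclidean norm; for differentiable $g$, $D_g(y,x)=g(y)-g(x)-\langle\nabla g(x),y-x\rangle$. *)

From HB Require Import structures.
From mathcomp Require Import all_boot all_order all_algebra.
From mathcomp Require Import all_classical all_reals all_analysis.
Set Implicit Arguments. Unset Strict Implicit. Unset Printing Implicit Defensive.
Import Order.TTheory GRing.Theory Num.Theory.
Import numFieldNormedType.Exports.
Local Open Scope classical_set_scope.
Local Open Scope ring_scope.

(* Euclidean inner product and Euclidean norm on R^d
   (NB: the library norm on matrices is the max-norm, so we do not use it). *)
Definition dotv {R : realType} {d : nat} (u v : 'rV[R]_d) : R :=
  \sum_(i < d) u ord0 i * v ord0 i.
Definition enorm {R : realType} {d : nat} (u : 'rV[R]_d) : R :=
  Num.sqrt (dotv u u).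

Definition is_gradient_at {R : realType} {d : nat}
  (f : 'rV[R]_d -> R) (g : 'rV[R]_d -> 'rV[R]_d) (x : 'rV[R]_d) : Prop :=
  differentiable f x /\ forall v : 'rV[R]_d, 'd f x v = dotv (g x) v.

Definition bregman {R : realType} {d : nat}
  (g : 'rV[R]_d -> R) (gradg : 'rV[R]_d -> 'rV[R]_d) (y x : 'rV[R]_d) : R :=
  g y - g x - dotv (gradg x) (y - x).

(* Write E_k = A_k e_k.  Since A_{k+1} = A_k (1 + tau), the energy increment
   is A_k ((1 + tau) e_{k+1} - e_k).  Applying the three-point identity of D_h at
   (x*, z_{k+1}, z_k) and (x*, z_{k+1}, x_{k+1}) and substituting the mirror
   update for z, this bracket is bounded, via the uniform convexity of f at
   (x*, x_{k+1}) and (x_k, x_{k+1}) and the extrapolation formula for x_{k+1},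
   by tau <grad f(x_{k+1}), z_k - z_{k+1}> - mu D_h(z_{k+1}, z_k) plus
   nonpositive Bregman terms.  Strong convexity of h and Young's inequality
   bound this cross term by tau^2 |grad f(x_{k+1})|^2 / (2 mu sigma). *)
From HB Require Import structures.
From mathcomp Require Import all_boot all_order all_algebra.
From mathcomp Require Import all_classical all_reals all_analysis.
From mathcomp Require Import ring lra.
Import Order.TTheory GRing.Theory Num.Theory.
Import numFieldNormedType.Exports.
Set Implicit Arguments.
Unset Strict Implicit.
Local Open Scope ring_scope.

Section RowVectors.
Variables (R : realType) (d : nat).
Implicit Types u v w : 'rV[R]_d.

Lemma dotvC u v : dotv u v = dotv v u.
Proof. by apply: eq_bigr => i _; rewrite mulrC. Qed.

Lemma dotvDl u v w : dotv (u + v) w = dotv u w + dotv v w.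
Proof. by rewrite /dotv -big_split; apply: eq_bigr => i _; rewrite mxE mulrDl. Qed.

Lemma dotvZl (a : R) u v : dotv (a *: u) v = a * dotv u v.
Proof. by rewrite /dotv mulr_sumr; apply: eq_bigr => i _; rewrite mxE mulrA. Qed.

Lemma dotvNl u v : dotv (- u) v = - dotv u v.
Proof. by rewrite -scaleN1r dotvZl mulN1r. Qed.

Lemma dotvBl u v w : dotv (u - v) w = dotv u w - dotv v w.
Proof. by rewrite dotvDl dotvNl. Qed.

Lemma dotvDr u v w : dotv w (u + v) = dotv w u + dotv w v.
Proof. by rewrite dotvC dotvDl !(dotvC w). Qed.

Lemma dotvZr (a : R) u v : dotv v (a *: u) = a * dotv v u.
Proof. by rewrite dotvC dotvZl dotvC. Qed.

Lemma dotvNr u v : dotv v (- u) = - dotv v u.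
Proof. by rewrite dotvC dotvNl dotvC. Qed.

Lemma dotvBr u v w : dotv w (u - v) = dotv w u - dotv w v.
Proof. by rewrite dotvDr dotvNr. Qed.

Definition dotvE := (dotvDl, dotvBl, dotvNl, dotvZl, dotvDr, dotvBr, dotvNr, dotvZr).

Lemma dotv_ge0 u : 0 <= dotv u u.
Proof. by apply: sumr_ge0 => i _; rewrite -expr2 sqr_ge0. Qed.

Lemma enorm_sqr u : enorm u ^+ 2 = dotv u u.
Proof. by rewrite /enorm sqr_sqrtr // dotv_ge0. Qed.

Lemma dotv_young (c : R) u v : 0 < c ->
  dotv u v <= dotv u u / (2 * c) + c / 2 * dotv v v.
Proof.
move=> c_gt0; rewrite -subr_ge0.
have -> : dotv u u / (2 * c) + c / 2 * dotv v v - dotv u v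
          = dotv (u - c *: v) (u - c *: v) / (2 * c).
  by rewrite !dotvE (dotvC v u); field; rewrite gt_eqF.
by rewrite divr_ge0 ?dotv_ge0 // mulr_ge0 // ltW.
Qed.

Lemma bregman_three_point (g : 'rV[R]_d -> R) gradg a b c :
  bregman g gradg a b + bregman g gradg b c - bregman g gradg a c
  = dotv (gradg c - gradg b) (a - b).
Proof. by rewrite /bregman !dotvE; lra. Qed.

Lemma scale_convex_step (tau : R) u v :
  0 <= tau -> (1 + tau) *: ((tau / (1 + tau)) *: u + (1 / (1 + tau)) *: v) = tau *: u + v.
Proof.
move=> tau_ge0; have tau1_neq0 : 1 + tau != 0 by rewrite gt_eqF //; lra.
by rewrite scalerDr !scalerA !mulrA !(mulrC (1 + tau)) !mulfK // scale1r.
Qed.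

End RowVectors.

Section MirrorStep.
Variables (R : realType) (d : nat) (X : set 'rV[R]_d) (mu sigma : R).
Variables (h f : 'rV[R]_d -> R) (gradh gradf : 'rV[R]_d -> 'rV[R]_d).
Hypotheses (mu_gt0 : 0 < mu) (sigma_gt0 : 0 < sigma).
Hypothesis h_strong : forall y w, X y -> X w ->
  sigma / 2 * enorm (y - w) ^+ 2 <= bregman h gradh y w.
Hypothesis f_unif : forall y w, X y -> X w ->
  mu * bregman h gradh y w <= bregman f gradf y w.

Local Notation Dh := (bregman h gradh).

Lemma bregman_ge0 y w : X y -> X w -> 0 <= Dh y w.
Proof.
move=> Xy Xw; apply: le_trans _ (h_strong Xy Xw).
by rewrite mulr_ge0 ?sqr_ge0 // divr_ge0 // ltW.
Qed.

Lemma mirror_step_potential (tau : R) (g s x' z z' : 'rV[R]_d) :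
  gradh z' = gradh z + tau *: (gradh x' - gradh z' - mu^-1 *: g) ->
  mu * (Dh s z' - Dh s z) + tau * mu * Dh s z'
  = - mu * Dh z' z - tau * mu * Dh z' x' + tau * mu * Dh s x'
    + tau * dotv g (s - z').
Proof.
move=> z'_update.
have -> : Dh s z = Dh s z' + Dh z' z - dotv (gradh z - gradh z') (s - z').
  by rewrite -(bregman_three_point h gradh); ring.
have -> : Dh s x' = Dh s z' + Dh z' x' - dotv (gradh x' - gradh z') (s - z').
  by rewrite -(bregman_three_point h gradh); ring.
have -> : gradh z - gradh z' = - (tau *: (gradh x' - gradh z' - mu^-1 *: g)).
  by rewrite {1}z'_update opprD addrA subrr add0r.
by rewrite !dotvE; field; rewrite gt_eqF.
Qed.

Lemma bregman_young_cross (tau : R) (g z z' : 'rV[R]_d) : X z -> X z' ->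
  tau * dotv g (z - z') - mu * Dh z' z
  <= tau ^+ 2 / (2 * mu * sigma) * enorm g ^+ 2.
Proof.
move=> Xz Xz'; have musigma_gt0 : 0 < mu * sigma by rewrite mulr_gt0.
have young := dotv_young (tau *: g) (z - z') musigma_gt0.
have strong := ler_wpM2l (ltW mu_gt0) (h_strong Xz' Xz).
rewrite enorm_sqr -opprB dotvNl dotvNr opprK in strong.
rewrite !dotvZl !dotvZr [2 * _]mulrA in young.
have -> : tau ^+ 2 / (2 * mu * sigma) * enorm g ^+ 2
          = tau * (tau * dotv g g) / (2 * mu * sigma) by rewrite enorm_sqr; ring.
lra.
Qed.

Lemma energy_step_le (tau : R) (s x x' z z' : 'rV[R]_d) :
  X s -> X x -> X x' -> X z -> X z' -> 0 <= tau ->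
  x' = (tau / (1 + tau)) *: z + (1 / (1 + tau)) *: x ->
  gradh z' = gradh z + tau *: (gradh x' - gradh z' - mu^-1 *: gradf x') ->
  (1 + tau) * (mu * Dh s z' + f x' - f s) - (mu * Dh s z + f x - f s)
  <= tau ^+ 2 / (2 * mu * sigma) * enorm (gradf x') ^+ 2.
Proof.
move=> Xs Xx Xx' Xz Xz' tau_ge0 x'_def z'_update.
set g := gradf x'.
have potential := mirror_step_potential s z'_update.
have cross := bregman_young_cross tau g Xz Xz'.
have conv_s : tau * (mu * Dh s x') <= tau * (f s - f x' - dotv g (s - x'))
  := ler_wpM2l tau_ge0 (f_unif Xs Xx').
have conv_x : mu * Dh x x' <= f x - f x' - dotv g (x - x') := f_unif Xx Xx'.
have Dx_ge0 : 0 <= mu * Dh x x' := mulr_ge0 (ltW mu_gt0) (bregman_ge0 Xx Xx').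
have Dz_ge0 : 0 <= tau * mu * Dh z' x'.
  exact: mulr_ge0 (mulr_ge0 tau_ge0 (ltW mu_gt0)) (bregman_ge0 Xz' Xx').
have x'_comb : (1 + tau) * dotv g x' = tau * dotv g z + dotv g x.
  by rewrite -dotvZr x'_def scale_convex_step // !dotvE.
rewrite !dotvE in potential cross conv_s conv_x.
lra.
Qed.

End MirrorStep.

Local Open Scope classical_set_scope.

Theorem proposition8 (R : realType) (d : nat) (X : set 'rV[R]_d)
  (mu sigma delta : R)
  (h f : 'rV[R]_d -> R) (gradh gradf : 'rV[R]_d -> 'rV[R]_d)
  (xstar : 'rV[R]_d) (A : nat -> R) (x z : nat -> 'rV[R]_d) :
  closed X -> convex_set X ->
  0 < mu -> 0 < sigma -> 0 < delta ->
  (* h continuously differentiable on X *)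
  (forall y, X y -> is_gradient_at h gradh y) ->
  {within X, continuous gradh} ->
  (forall y w, X y -> X w ->
     bregman h gradh y w >= sigma / 2 * enorm (y - w) ^+ 2) ->
  (* f differentiable on X and mu-uniformly convex w.r.t. h *)
  (forall y, X y -> is_gradient_at f gradf y) ->
  (forall y w, X y -> X w -> bregman f gradf y w >= mu * bregman h gradh y w) ->
  (* xstar is a minimizer of f on X *)
  X xstar -> (forall y, X y -> f xstar <= f y) ->
  (* (A_k) positive nondecreasing *)
  (forall k, 0 < A k) -> (forall k, A k <= A k.+1) ->
  (forall k, X (x k)) -> (forall k, X (z k)) ->
  (forall k, let tau := (A k.+1 - A k) / A k in
     x k.+1 = (tau / (1 + tau)) *: z k + (1 / (1 + tau)) *: x k) ->
  (forall k, let tau := (A k.+1 - A k) / A k in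
     gradh (z k.+1) = gradh (z k)
       + tau *: (gradh (x k.+1) - gradh (z k.+1) - mu^-1 *: gradf (x k.+1))) ->
  forall k,
    let alpha := A k.+1 - A k in
    let tau := alpha / A k in
    let E := fun j => A j * (mu * bregman h gradh xstar (z j) + f (x j) - f xstar) in
    (E k.+1 - E k) / delta
      <= A k * tau ^+ 2 / (2 * mu * sigma * delta) * enorm (gradf (x k.+1)) ^+ 2.
Proof.
move=> _ _ mu_gt0 sigma_gt0 delta_gt0 _ _ h_strong _ f_unif Xxstar _
  A_gt0 A_incr Xx Xz x_update z_update k /=.
set tau := (A k.+1 - A k) / A k.
have tau_ge0 : 0 <= tau by rewrite divr_ge0 ?subr_ge0 // ltW.
have step := energy_step_le mu_gt0 sigma_gt0 h_strong f_unif
  Xxstar (Xx k) (Xx k.+1) (Xz k) (Xz k.+1) tau_ge0 (x_update k) (z_update k).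
have A_next : A k.+1 = A k * (1 + tau) by rewrite /tau; field; rewrite gt_eqF.
set e' := mu * bregman h gradh xstar (z k.+1) + f (x k.+1) - f xstar in step *.
set e := mu * bregman h gradh xstar (z k) + f (x k) - f xstar in step *.
have -> : (A k.+1 * e' - A k * e) / delta = A k / delta * ((1 + tau) * e' - e).
  by rewrite A_next; field; rewrite gt_eqF.
have -> : A k * tau ^+ 2 / (2 * mu * sigma * delta) = A k / delta * (tau ^+ 2 / (2 * mu * sigma)).
  by field; rewrite !gt_eqF.
rewrite -[leRHS]mulrA; apply: ler_wpM2l step.
by rewrite divr_ge0 // ltW.
Qed.
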